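(* Let $\mathcal{C}$ be a PL-cograph that takes more than one value. Then $\mathcal{C}$ takes at least three distinct values, and for any distinct points $P,Q$ there is a point $R$ such that $\mathcal{C}(P,Q)$, $\mathcal{C}(P,R)$ and $\mathcal{C}(Q,R)$ are pairwise distinct.
   Context: A cograph is a function $\mathcal{C}$ assigning to each unordered pair $\{P,Q\}$ of distinct elements of a point set a value $\mathcal{C}(P,Q)$ (an edge). A PL-cograph is a cograph satisfying: (1) for distinct points $P,Q,R$, if $\mathcal{C}(P,Q)=\mathcal{C}(Q,R)$ then $\mathcal{C}(P,Q)=\mathcal{C}(P,R)$; (2) for distinct points $P,Q,R,S$, if $\mathcal{C}(P,Q)=\mathcal{C}(R,S)$ then $\mathcal{C}(P,Q)=\mathcal{C}(P,R)=\mathcal{C}(P,S)=\mathcal{C}(Q,R)=\mathcal{C}(Q,S)$. *)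

(* An assignment on
   unordered pairs {P,Q} of distinct points is represented by a function
   C : T -> T -> V that is symmetric on distinct points; the values C P P
   are irrelevant and never used. *)
Definition cograph {T V : Type} (C : T -> T -> V) : Prop :=
  forall P Q : T, P <> Q -> C P Q = C Q P.

Definition PL_axiom1 {T V : Type} (C : T -> T -> V) : Prop :=
  forall P Q R : T, P <> Q -> P <> R -> Q <> R ->
    C P Q = C Q R -> C P Q = C P R.

Definition PL_axiom2 {T V : Type} (C : T -> T -> V) : Prop :=
  forall P Q R S : T,
    P <> Q -> P <> R -> P <> S -> Q <> R -> Q <> S -> R <> S ->
    C P Q = C R S ->
    C P Q = C P R /\ C P Q = C P S /\ C P Q = C Q R /\ C P Q = C Q S.

Definition PL_cograph {T V : Type} (C : T -> T -> V) : Prop :=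
  cograph C /\ PL_axiom1 C /\ PL_axiom2 C.

Definition takes_more_than_one_value {T V : Type} (C : T -> T -> V) : Prop :=
  exists P Q R S : T, P <> Q /\ R <> S /\ C P Q <> C R S.

Definition takes_at_least_three_values {T V : Type} (C : T -> T -> V) : Prop :=
  exists P1 Q1 P2 Q2 P3 Q3 : T,
    P1 <> Q1 /\ P2 <> Q2 /\ P3 <> Q3 /\
    C P1 Q1 <> C P2 Q2 /\ C P1 Q1 <> C P3 Q3 /\ C P2 Q2 <> C P3 Q3.

(* Symmetry and axiom (1) say that a triangle with two equal edges is
   monochromatic, so every triangle is either monochromatic or rainbow.  Given
   an edge PQ, pick an edge RS of another value.  If R or S lies on PQ, the
   other endpoint already spans a non-monochromatic triangle with PQ;
   otherwise PQR and PRS cannot both be monochromatic, since C P Q <> C R S.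
   The rainbow triangle on any edge exhibits three values. *)

From Stdlib Require Import Classical.

Definition rainbow {T V : Type} (C : T -> T -> V) (P Q R : T) : Prop :=
  C P Q <> C P R /\ C P Q <> C Q R /\ C P R <> C Q R.

Section PL_axiom1_triangles.

Variables (T V : Type) (C : T -> T -> V).
Hypothesis C_sym : cograph C.
Hypothesis C_ax1 : PL_axiom1 C.

Lemma isosceles_equilateral (P Q R : T) :
  P <> Q -> P <> R -> Q <> R -> C P Q = C P R -> C Q R = C P Q.
Proof.
  intros HPQ HPR HQR E.
  assert (EQP : C Q P = C P Q) by (apply C_sym; congruence).
  rewrite <- EQP. symmetry.
  apply C_ax1; congruence.
Qed.

Lemma triangle_rainbow (P Q R : T) :
  P <> Q -> P <> R -> Q <> R ->
  C P Q <> C P R \/ C P Q <> C Q R -> rainbow C P Q R.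
Proof.
  intros HPQ HPR HQR Hdiff.
  assert (EQP : C Q P = C P Q) by (apply C_sym; congruence).
  assert (ERP : C R P = C P R) by (apply C_sym; congruence).
  assert (ERQ : C R Q = C Q R) by (apply C_sym; congruence).
  repeat split; intro E.
  - pose proof (isosceles_equilateral P Q R HPQ HPR HQR E).
    destruct Hdiff; congruence.
  - assert (E' : C Q P = C Q R) by congruence.
    pose proof (isosceles_equilateral Q P R (not_eq_sym HPQ) HQR HPR E').
    destruct Hdiff; congruence.
  - assert (E' : C R P = C R Q) by congruence.
    pose proof (isosceles_equilateral R P Q (not_eq_sym HPR) (not_eq_sym HQR)
                  HPQ E').
    destruct Hdiff; congruence.
Qed.

Lemma off_color_apex (P Q R S : T) :
  P <> Q -> R <> S -> C R S <> C P Q ->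
  exists X, X <> P /\ X <> Q /\ (C P Q <> C P X \/ C P Q <> C Q X).
Proof.
  intros HPQ HRS Hdiff.
  destruct (classic (R = P)) as [-> | HRP].
  { exists S. repeat split; [congruence | intros ->; congruence | left; congruence]. }
  destruct (classic (R = Q)) as [-> | HRQ].
  { exists S. repeat split; [intros ->; apply Hdiff, C_sym; congruence | congruence |
                             right; congruence]. }
  destruct (classic (S = P)) as [-> | HSP].
  { exists R. repeat split; auto. left. rewrite (C_sym P R); congruence. }
  destruct (classic (S = Q)) as [-> | HSQ].
  { exists R. repeat split; auto. right. rewrite (C_sym Q R); congruence. }
  destruct (classic (C P Q = C P R)) as [ER | ER]; [| exists R; auto].
  destruct (classic (C P Q = C P S)) as [ES | ES]; [| exists S; auto].
  exfalso. apply Hdiff.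
  rewrite (isosceles_equilateral P R S); congruence.
Qed.

Lemma edge_in_rainbow_triangle (P Q : T) :
  takes_more_than_one_value C -> P <> Q ->
  exists R, R <> P /\ R <> Q /\ rainbow C P Q R.
Proof.
  intros [A [B [D [E [HAB [HDE HAD]]]]]] HPQ.
  assert (Hedge : exists R S, R <> S /\ C R S <> C P Q).
  { destruct (classic (C A B = C P Q)) as [EAB | EAB].
    - exists D, E. split; congruence.
    - exists A, B. auto. }
  destruct Hedge as [R [S [HRS Hdiff]]].
  destruct (off_color_apex P Q R S HPQ HRS Hdiff) as [X [HXP [HXQ HX]]].
  exists X. repeat split; auto.
  all: apply triangle_rainbow; auto.
Qed.

End PL_axiom1_triangles.

Theorem lemma5p1 (T V : Type) (C : T -> T -> V) :
  PL_cograph C -> takes_more_than_one_value C ->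
  takes_at_least_three_values C /\
  (forall P Q : T, P <> Q ->
     exists R : T, R <> P /\ R <> Q /\
       C P Q <> C P R /\ C P Q <> C Q R /\ C P R <> C Q R).
Proof.
  intros [C_sym [C_ax1 _]] Hmany.
  split; [| intros P Q; exact (edge_in_rainbow_triangle T V C C_sym C_ax1 P Q Hmany)].
  pose proof Hmany as [A [B [_ [_ [HAB _]]]]].
  destruct (edge_in_rainbow_triangle T V C C_sym C_ax1 A B Hmany HAB)
    as [R [HRA [HRB [HAB_AR [HAB_BR HAR_BR]]]]].
  exists A, B, A, R, B, R. repeat split; auto.
Qed.
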